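(* There is a function $\widehat g(n)=\Theta(\log^2 n)$ such that for all $n$, all distinct $i,j\in[n]$, every real $\delta\ge0$ and every integer $0\le t\le n\log n$, $$\sum_{m=2}^{n-1}\mathcal{P}^{n,t}_{1,m}\big([n]\times\overline{j\pm\delta}\big)\le 2\delta+\widehat g(n),$$ where $\widehat g$ does not depend on $i,j,\delta,t$.
   Context: The random-to-random insertions shuffle on a deck of $n$ cards numbered $1,\dots,n$: at each step a card is chosen uniformly at random, removed, and reinserted at a uniformly random position. Orderings are identified with $\sigma\in S_n$, $\sigma(k)$ being the position of card $k$; $\Pi_t$ is the induced random walk on $S_n$ and $\mathbb{P}^n_\sigma$ its law started at $\sigma$. $A^t$ is the (random) set of cards not chosen for removal in the first $t$ shuffles. For $k$ and $M\ge0$, $\overline{k\pm M}=[n]\cap[k-M,k+M]$. For distinct $i,j\in[n]$, $m_1\in[n-1]$, $m_2\in[n]$ and integer $t\ge0$, let $\sigma\in S_n$ be any permutation with $\sigma(j)=m_2$ and $\sigma(i)=m_1+1$ if $m_2\le m_1$, $\sigma(i)=m_1$ if $m_2>m_1$, and define the probability measure on $[n]\times[n]$ $$\mathcal{P}^{n,t}_{m_1,m_2}(\cdot)=\mathbb{P}^n_\sigma\big((\Pi_t(i),\Pi_t(j))\in\cdot\,\big|\,i,j\in A^t\big).$$ $\log$ is the natural logarithm. *)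

From mathcomp Require Import all_boot.
From mathcomp Require Import perm.
From Stdlib Require Import Reals.

Set Implicit Arguments.
Unset Strict Implicit.
Unset Printing Implicit Defensive.

(* Conventions: cards are 'I_n (ordinal k stands for card k+1), positions are
   stored 0-indexed as nats (value x stands for position x+1).  A configuration
   is the map card |-> position.  One shuffle step is driven by a pair
   (c, p) : 'I_n * 'I_n : card c is removed and reinserted so that it ends at
   position p; the pair is uniform over 'I_n * 'I_n. *)

Definition rtr_step n (pos : 'I_n -> nat) (cp : 'I_n * 'I_n) : 'I_n -> nat :=
  fun k =>
    let c := cp.1 in
    let p := nat_of_ord cp.2 in
    let a := pos c in
    let x := pos k in
    if k == c then p
    else if (a < x) && (x <= p) then x.-1
    else if (p <= x) && (x < a) then x.+1
    else x.

Definition rtr_run n (sigma : {perm 'I_n}) (w : seq ('I_n * 'I_n)) : 'I_n -> nat :=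
  foldl (@rtr_step n) (fun k => nat_of_ord (sigma k)) w.

Definition avoids n (i j : 'I_n) (w : seq ('I_n * 'I_n)) : bool :=
  all (fun cp => (cp.1 != i) && (cp.1 != j)) w.

(* P^n_sigma((Pi_t(i), Pi_t(j)) \in S | i, j \in A^t), positions 1-indexed in S.
   The t shuffle choices are i.i.d. uniform on 'I_n * 'I_n, so the law of the
   choice sequence is uniform on t.-tuples; the conditional probability is a
   ratio of counts. *)
Definition Pcond n t (sigma : {perm 'I_n}) (i j : 'I_n) (S : pred (nat * nat)) : R :=
  (INR #|[set w : t.-tuple ('I_n * 'I_n) |
            avoids i j w &&
            S ((rtr_run sigma w i).+1, (rtr_run sigma w j).+1)]|
   / INR #|[set w : t.-tuple ('I_n * 'I_n) | avoids i j w]|)%R.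

Definition start_ok n (i j : 'I_n) (m1 m2 : nat) (sigma : {perm 'I_n}) : Prop :=
  (nat_of_ord (sigma j)).+1 = m2 /\
  (nat_of_ord (sigma i)).+1 = (if m2 <= m1 then m1.+1 else m1).

Definition window (n k : nat) (M : R) : pred nat :=
  fun x => (1 <= x <= n) &&
           (if Rle_dec (Rabs (INR x - INR k)) M then true else false).

Definition ev_window (n jl : nat) (M : R) : pred (nat * nat) :=
  fun ab => (1 <= ab.1 <= n) && window n jl M ab.2.

From mathcomp Require Import all_boot perm.
From Stdlib Require Import Reals.
From mathcomp Require Import zify.
From Stdlib Require Import Lra.

Set Implicit Arguments.
Unset Strict Implicit.
Unset Printing Implicit Defensive.

(* Cards i and j are never removed, so their relative order is preserved and i, which
   starts at the bottom, stays below j.  Given this, among the (n-2)n equally likely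
   choices of a shuffle sparing i and j, the (0-indexed) position z of j moves to z-1 for
   (z-1)(n-z) of them, to z+1 for (n-z-1)(z+1) of them and stays otherwise, whatever the
   other cards do.  The conditional counts are therefore those of a birth-death chain
   whose weights entering any state sum to at most (n-2)n+1; summing over the starting
   positions of j, the runs ending in the window number at most ((n-2)n+1)^t times its
   size.  Dividing by ((n-2)n)^t and using t <= n ln n leaves a factor
   exp(ln n / (n-2)) = 1 + O(ln n / n), and the window has at most min(2 delta + 1, n)
   positions. *)

Definition spares n (i j : 'I_n) (x : 'I_n * 'I_n) : bool := (x.1 != i) && (x.1 != j).

Definition count_runs n (i j : 'I_n) t (pos : 'I_n -> nat) (Q : pred ('I_n -> nat)) : nat :=
  #|[set w : t.-tuple ('I_n * 'I_n) | avoids i j w && Q (foldl (@rtr_step n) pos w)]|.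

Lemma count_runsE n (i j : 'I_n) t pos Q :
  count_runs i j t pos Q =
  \sum_(w : t.-tuple ('I_n * 'I_n)) (avoids i j w && Q (foldl (@rtr_step n) pos w) : nat).
Proof. by rewrite /count_runs -sum1dep_card big_mkcond. Qed.

Lemma count_runs0 n (i j : 'I_n) pos Q : count_runs i j 0 pos Q = Q pos.
Proof.
rewrite count_runsE (big_pred1 [tuple]) /=; first by case: (Q pos).
by move=> w; apply/esym/eqP/val_inj; case: w => [[]].
Qed.

Lemma count_runsS n (i j : 'I_n) t pos Q :
  count_runs i j t.+1 pos Q = \sum_(x | spares i j x) count_runs i j t (rtr_step pos x) Q.
Proof.
pose cons_tuple (p : ('I_n * 'I_n) * t.-tuple ('I_n * 'I_n)) := [tuple of p.1 :: p.2].
rewrite count_runsE (reindex cons_tuple) /=; last first.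
  exists (fun w : t.+1.-tuple _ => (thead w, [tuple of behead w])).
    by move=> [x w] _ /=; rewrite theadE; congr pair; apply: val_inj.
  by move=> w _ /=; rewrite [RHS]tuple_eta.
rewrite -(pair_big xpredT xpredT (fun x w =>
  (avoids i j (cons_tuple (x, w)) && Q (foldl (@rtr_step n) pos (cons_tuple (x, w))) : nat))).
rewrite [RHS]big_mkcond /=; apply: eq_bigr => x _.
rewrite count_runsE /spares; case: ifP => hx; first exact: eq_bigr.
by rewrite big1.
Qed.

Lemma sum_ord_D2 n (i j : 'I_n) (F : 'I_n -> nat) : i != j ->
  \sum_c F c = F i + F j + \sum_(c | (c != i) && (c != j)) F c.
Proof.
move=> ij; rewrite (bigD1 i) //= (bigD1 j) /=; last by rewrite eq_sym.
by rewrite addnA; congr (_ + _); apply: eq_bigl => c; rewrite andbC.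
Qed.

Lemma sum_spares_prod n (i j : 'I_n) (F G : 'I_n -> nat) :
  \sum_(x | spares i j x) F x.1 * G x.2 =
  (\sum_(c | (c != i) && (c != j)) F c) * \sum_p G p.
Proof.
rewrite big_distrl /= (eq_bigl (fun x => ((x.1 != i) && (x.1 != j)) && true)); last first.
  by move=> x; rewrite andbT.
rewrite -(pair_big_dep (fun c => (c != i) && (c != j)) (fun _ _ => true) (fun c p => F c * G p)).
by apply: eq_bigr => c _; rewrite big_distrr.
Qed.

Lemma card_spares n (i j : 'I_n) : i != j -> \sum_(x | spares i j x) 1 = (n - 2) * n.
Proof.
move=> ij; have := sum_spares_prod i j (fun=> 1) (fun=> 1).
rewrite (eq_bigr (fun=> 1 * 1)) // => ->.
rewrite !sum1_card card_ord; congr (_ * _).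
have := sum_ord_D2 (fun=> 1) ij; rewrite !sum1_card card_ord; lia.
Qed.

Lemma count_runs_predT n (i j : 'I_n) t pos : i != j ->
  count_runs i j t pos predT = expn ((n - 2) * n) t.
Proof.
move=> ij; elim: t pos => [|t IH] pos; first by rewrite count_runs0.
rewrite count_runsS (eq_bigr (fun=> 1 * expn ((n - 2) * n) t)); last first.
  by move=> x _; rewrite IH mul1n.
by rewrite -big_distrl card_spares // expnS.
Qed.

Lemma card_avoids n (i j : 'I_n) t : i != j ->
  #|[set w : t.-tuple ('I_n * 'I_n) | avoids i j w]| = expn ((n - 2) * n) t.
Proof.
move=> ij; rewrite -(count_runs_predT t (fun=> 0) ij).
by apply: eq_card => w; rewrite !inE andbT.
Qed.

Definition slide (a p z : nat) : nat :=
  if (a < z) && (z <= p) then z.-1 else if (p <= z) && (z < a) then z.+1 else z.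

Lemma slide_inj a p y z : y != a -> z != a -> slide a p y = slide a p z -> y = z.
Proof. by rewrite /slide; repeat case: ifP => ?; lia. Qed.

Lemma slide_neq a p z : z != a -> slide a p z != p.
Proof. by rewrite /slide; repeat case: ifP => ?; lia. Qed.

Lemma slide_mono a p y z : y != a -> z != a -> y < z -> slide a p y < slide a p z.
Proof. by rewrite /slide; repeat case: ifP => ?; lia. Qed.

Lemma slide_lt a p z n : a < n -> p < n -> z < n -> slide a p z < n.
Proof. by rewrite /slide; repeat case: ifP => ?; lia. Qed.

Lemma slide_near a p z : slide a p z \in [:: z.-1; z.+1; z].
Proof. by rewrite /slide; repeat case: ifP => _; rewrite !inE eqxx ?orbT. Qed.

Lemma slide_eq_pred a p z : a != z -> 0 < z -> (slide a p z == z.-1) = (a < z) && (z <= p).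
Proof. by rewrite /slide; repeat case: ifP => ?; lia. Qed.

Lemma slide_eq_succ a p z : a != z -> (slide a p z == z.+1) = (p <= z) && (z < a).
Proof. by rewrite /slide; repeat case: ifP => ?; lia. Qed.

Lemma rtr_step_moved n (pos : 'I_n -> nat) x : rtr_step pos x x.1 = x.2.
Proof. by rewrite /rtr_step eqxx. Qed.

Lemma rtr_step_other n (pos : 'I_n -> nat) x k :
  k != x.1 -> rtr_step pos x k = slide (pos x.1) x.2 (pos k).
Proof. by move=> hk; rewrite /rtr_step (negbTE hk). Qed.

Lemma rtr_step_lt n (pos : 'I_n -> nat) x k :
  (forall k, pos k < n) -> rtr_step pos x k < n.
Proof.
move=> pos_lt; case: (eqVneq k x.1) => [->|hk]; first by rewrite rtr_step_moved.
by rewrite rtr_step_other //; apply: slide_lt.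
Qed.

Lemma rtr_step_inj n (pos : 'I_n -> nat) x : injective pos -> injective (rtr_step pos x).
Proof.
move=> pos_inj k l; have pos_neq u v : u != v -> pos u != pos v by rewrite (inj_eq pos_inj).
case: (eqVneq k x.1) => [->|hk]; case: (eqVneq l x.1) => [->|hl] //.
- rewrite rtr_step_moved rtr_step_other // => /esym/eqP.
  by rewrite (negbTE (slide_neq _ (pos_neq _ _ hl))).
- rewrite rtr_step_moved rtr_step_other // => /eqP.
  by rewrite (negbTE (slide_neq _ (pos_neq _ _ hk))).
- by rewrite !rtr_step_other // => /(slide_inj (pos_neq _ _ hk) (pos_neq _ _ hl)) /pos_inj.
Qed.

Lemma rtr_step_mono n (pos : 'I_n -> nat) x k l : injective pos -> k != x.1 -> l != x.1 ->
  pos k < pos l -> rtr_step pos x k < rtr_step pos x l.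
Proof.
move=> pos_inj hk hl; rewrite !rtr_step_other //.
by apply: slide_mono; rewrite (inj_eq pos_inj).
Qed.

Lemma sum_nat_predC n (P : pred 'I_n) : \sum_c (~~ P c : nat) = n - \sum_c (P c : nat).
Proof.
have : \sum_c ((P c : nat) + (~~ P c : nat)) = n.
  by rewrite (eq_bigr (fun=> 1)) ?sum1_card ?card_ord // => c _; case: (P c).
rewrite big_split /=; lia.
Qed.

Lemma sum_ord_lt n z : \sum_(p < n) (p < z : nat) = minn z n.
Proof.
rewrite -(big_mkord xpredT (fun p => (p < z : nat))).
elim: n => [|n IH]; first by rewrite big_nil; lia.
by rewrite big_nat_recr //= IH; case: (ltnP n z) => /=; lia.
Qed.

Lemma sum_ord_ge n z : \sum_(p < n) (z <= p : nat) = n - minn z n.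
Proof.
rewrite -sum_ord_lt -(sum_nat_predC (fun p : 'I_n => p < z)).
by apply: eq_bigr => p _; rewrite leqNgt.
Qed.

Lemma sum_lt_inj n (pos : 'I_n -> nat) z : injective pos -> (forall k, pos k < n) ->
  \sum_c (pos c < z : nat) = minn z n.
Proof.
move=> pos_inj pos_lt; pose f c := Ordinal (pos_lt c).
have f_inj : injective f by move=> u v /(congr1 val) /pos_inj.
by rewrite -sum_ord_lt [RHS](reindex_inj f_inj).
Qed.

Lemma sum_gt_inj n (pos : 'I_n -> nat) z : injective pos -> (forall k, pos k < n) ->
  \sum_c (z < pos c : nat) = n - minn z.+1 n.
Proof.
move=> pos_inj pos_lt; rewrite -(sum_lt_inj z.+1 pos_inj pos_lt).
rewrite -(sum_nat_predC (fun c => pos c < z.+1)).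
by apply: eq_bigr => c _; rewrite ltnNge.
Qed.

Lemma near3E (F : nat -> nat) s z : 0 < z -> s \in [:: z.-1; z.+1; z] ->
  F s = (s == z.-1) * F z.-1 + (s == z.+1) * F z.+1 + (s == z) * F z.
Proof.
move=> z_gt0; have d1 : (z.-1 == z.+1) = false by apply/eqP; lia.
have d2 : (z.-1 == z) = false by apply/eqP; lia.
have d3 : (z.+1 == z) = false by apply/eqP; lia.
rewrite !inE => /or3P[] /eqP ->; rewrite eqxx.
- by rewrite d1 d2 mul1n !mul0n !addn0.
- by rewrite eq_sym d1 d3 mul1n !mul0n add0n addn0.
- by rewrite eq_sym d2 eq_sym d3 mul1n !mul0n.
Qed.

Definition down_rate n z := z.-1 * (n - z).
Definition up_rate n z := (n - z.+1) * z.+1.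
Definition stay_rate n z := (n - 2) * n - down_rate n z - up_rate n z.

Section OneShuffle.

Variables (n : nat) (i j : 'I_n) (pos : 'I_n -> nat).
Hypotheses (neq_ij : i != j) (pos_inj : injective pos) (pos_lt : forall k, pos k < n)
  (pos_ij : pos i < pos j).

Lemma spares_neq x : spares i j x -> j != x.1 /\ pos x.1 != pos j.
Proof. by case/andP=> _ hx; rewrite eq_sym hx (inj_eq pos_inj). Qed.

Lemma count_spared_below : \sum_(c | (c != i) && (c != j)) (pos c < pos j : nat) = (pos j).-1.
Proof.
have := sum_ord_D2 (fun c => (pos c < pos j : nat)) neq_ij.
rewrite sum_lt_inj //= pos_ij ltnn; have := pos_lt j; lia.
Qed.

Lemma count_spared_above :
  \sum_(c | (c != i) && (c != j)) (pos j < pos c : nat) = n - (pos j).+1.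
Proof.
have := sum_ord_D2 (fun c => (pos j < pos c : nat)) neq_ij.
rewrite sum_gt_inj //= ltnn (leq_gtF (ltnW pos_ij)); have := pos_lt j; lia.
Qed.

Lemma count_moves_down :
  \sum_(x | spares i j x) (rtr_step pos x j == (pos j).-1 : nat) = down_rate n (pos j).
Proof.
rewrite (eq_bigr (fun x : 'I_n * 'I_n => (pos x.1 < pos j : nat) * (pos j <= x.2 : nat)))
  => [|x].
  rewrite (sum_spares_prod i j (fun c => (pos c < pos j : nat))
                               (fun p : 'I_n => (pos j <= p : nat))).
  rewrite count_spared_below sum_ord_ge.
  by rewrite /down_rate; congr (_ * _); have := pos_lt j; lia.
case/spares_neq => hj hpos; rewrite rtr_step_other // slide_eq_pred ?mulnb //; lia.
Qed.

Lemma count_moves_up :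
  \sum_(x | spares i j x) (rtr_step pos x j == (pos j).+1 : nat) = up_rate n (pos j).
Proof.
rewrite (eq_bigr (fun x : 'I_n * 'I_n => (pos j < pos x.1 : nat) * (x.2 < (pos j).+1 : nat)))
  => [|x].
  rewrite (sum_spares_prod i j (fun c => (pos j < pos c : nat))
                               (fun p : 'I_n => (p < (pos j).+1 : nat))).
  rewrite count_spared_above sum_ord_lt.
  by rewrite /up_rate; congr (_ * _); have := pos_lt j; lia.
by case/spares_neq => hj hpos; rewrite rtr_step_other // slide_eq_succ // mulnb andbC.
Qed.

Lemma rtr_step_near x : spares i j x -> rtr_step pos x j \in [:: (pos j).-1; (pos j).+1; pos j].
Proof. by case/spares_neq => hj _; rewrite rtr_step_other //; apply: slide_near. Qed.

Lemma count_moves_stay :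
  \sum_(x | spares i j x) (rtr_step pos x j == pos j : nat) = stay_rate n (pos j).
Proof.
have pos_j_gt0 : 0 < pos j by lia.
have := card_spares neq_ij.
rewrite (eq_bigr _ (fun x hx => near3E (fun=> 1) pos_j_gt0 (rtr_step_near hx))).
rewrite !big_split /= -!big_distrl /= !muln1 count_moves_down count_moves_up /stay_rate; lia.
Qed.

Lemma sum_spares_rtr_step (F : nat -> nat) :
  \sum_(x | spares i j x) F (rtr_step pos x j) =
  down_rate n (pos j) * F (pos j).-1 + up_rate n (pos j) * F (pos j).+1
  + stay_rate n (pos j) * F (pos j).
Proof.
have pos_j_gt0 : 0 < pos j by lia.
rewrite (eq_bigr _ (fun x hx => near3E F pos_j_gt0 (rtr_step_near hx))).
by rewrite !big_split /= -!big_distrl /= count_moves_down count_moves_up count_moves_stay.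
Qed.

End OneShuffle.

Fixpoint bd_count n (W : pred nat) t z : nat :=
  if t is t'.+1 then
    down_rate n z * bd_count n W t' z.-1 + up_rate n z * bd_count n W t' z.+1
    + stay_rate n z * bd_count n W t' z
  else W z.

Lemma count_runs_le_bd_count n (i j : 'I_n) (W : pred nat) t pos :
  i != j -> injective pos -> (forall k, pos k < n) -> pos i < pos j ->
  count_runs i j t pos (fun f => W (f j)) <= bd_count n W t (pos j).
Proof.
move=> ij; elim: t pos => [|t IH] pos pos_inj pos_lt pos_ij; first by rewrite count_runs0.
rewrite count_runsS /= -(sum_spares_rtr_step ij pos_inj pos_lt pos_ij (bd_count n W t)).
apply: leq_sum => x hx; apply: IH.
- exact: rtr_step_inj.
- by move=> k; apply: rtr_step_lt.
- by case/andP: hx => hi hj; apply: rtr_step_mono; rewrite // eq_sym.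
Qed.

(* The factor [1 < z] drops the inflow from position 0, which j never occupies. *)
Lemma bd_inflow_le n z : 3 <= n -> 1 <= z < n ->
  down_rate n z.+1 + (1 < z) * up_rate n z.-1 + stay_rate n z <= ((n - 2) * n).+1.
Proof.
move=> n3 /andP[z_gt0 z_lt]; case: z z_gt0 z_lt => [//|z] _ z_lt.
have [k ->] : exists k, n = z + k.+2 by exists (n - z.+2); lia.
rewrite /stay_rate /down_rate /up_rate /=.
have -> : z + k.+2 - z.+2 = k by lia.
have -> : z + k.+2 - z.+1 = k.+1 by lia.
have -> : z + k.+2 - 2 = z + k by lia.
have : z * k.+1 + k * z.+2 <= (z + k) * (z + k.+2) by nia.
by case: z {z_lt} => [|z] /=; nia.
Qed.

Lemma sum_bd_count_le n (W : pred nat) t : 3 <= n ->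
  \sum_(1 <= z < n) bd_count n W t z <= expn ((n - 2) * n).+1 t * \sum_(1 <= z < n) (W z : nat).
Proof.
move=> n3; elim: t => [|t IH]; first by rewrite expn0 mul1n.
have [m n_eq] : exists m, n = m.+1 by exists n.-1; lia.
have m_gt0 : 0 < m by lia.
rewrite /= !big_split /=.
have shift_down : \sum_(1 <= z < n) down_rate n z * bd_count n W t z.-1 =
    \sum_(1 <= z < n) down_rate n z.+1 * bd_count n W t z.
  rewrite n_eq big_nat_recl // big_nat_recr //= /down_rate /= mul0n add0n.
  by rewrite subnn muln0 mul0n addn0.
have shift_up : \sum_(1 <= z < n) up_rate n z * bd_count n W t z.+1 =
    \sum_(1 <= z < n) (1 < z) * up_rate n z.-1 * bd_count n W t z.
  rewrite n_eq [LHS]big_nat_recr // [RHS]big_nat_recl //= /up_rate /= !mul0n add0n.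
  rewrite subnn mul0n addn0.
  by apply: eq_big_nat => z /andP[z_gt0 _]; rewrite ltnS z_gt0 mul1n.
rewrite shift_down shift_up -!big_split /=.
apply: (@leq_trans (\sum_(1 <= z < n) ((n - 2) * n).+1 * bd_count n W t z)).
  rewrite big_nat_cond [leqRHS]big_nat_cond; apply: leq_sum => z /andP[hz _].
  by rewrite -!mulnDl leq_mul2r bd_inflow_le ?orbT.
by rewrite -big_distrr /= expnS -mulnA leq_mul2l IH orbT.
Qed.

Lemma sum_count_runs_le n (i j : 'I_n) (W : pred nat) t (sig : nat -> {perm 'I_n}) :
  3 <= n -> i != j -> (forall m, 2 <= m < n -> start_ok i j 1 m (sig m)) ->
  \sum_(2 <= m < n) count_runs i j t (fun k => sig m k : nat) (fun f => W (f j))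
    <= expn ((n - 2) * n).+1 t * \sum_(1 <= z < n) (W z : nat).
Proof.
move=> n3 ij start; apply: leq_trans (sum_bd_count_le W t n3).
have -> : \sum_(1 <= z < n) bd_count n W t z = \sum_(2 <= m < n.+1) bd_count n W t m.-1.
  by rewrite [RHS]big_add1.
rewrite big_nat_recr /=; last by lia.
apply: leq_trans (leq_addr _ _).
rewrite big_nat_cond [leqRHS]big_nat_cond; apply: leq_sum => m /andP[hm _].
have [sig_j sig_i] := start m hm.
have -> : m.-1 = sig m j by lia.
apply: count_runs_le_bd_count => //.
- by move=> u v /val_inj /perm_inj.
- by move: sig_i; rewrite (_ : (m <= 1) = false) //; lia.
Qed.

Lemma INR_leq m n : m <= n -> (INR m <= INR n)%R.
Proof. by move/leP; apply: le_INR. Qed.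

Lemma INR_expn a t : INR (expn a t) = (INR a ^ t)%R.
Proof. by elim: t => [|t IH]; rewrite ?expn0 // expnS mult_INR IH. Qed.

Lemma sum_INR_div (F : nat -> nat) a b (D : R) :
  \big[Rplus/0%R]_(a <= m < b) (INR (F m) / D)%R = (INR (\sum_(a <= m < b) F m) / D)%R.
Proof.
apply: (big_rec2 (fun x y => x = INR y / D)%R); first by rewrite /Rdiv Rmult_0_l.
by move=> m x y _ ->; rewrite plus_INR /Rdiv Rmult_plus_distr_r.
Qed.

Lemma sum_Pcond_window_le n (i j : 'I_n) (delta : R) t (sig : nat -> {perm 'I_n}) :
  3 <= n -> i != j -> (forall m, 2 <= m < n -> start_ok i j 1 m (sig m)) ->
  (\big[Rplus/0%R]_(2 <= m < n) Pcond t (sig m) i j (ev_window n j.+1 delta)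
    <= INR (\sum_(1 <= z < n) window n j.+1 delta z.+1) * (1 + / INR ((n - 2) * n)) ^ t)%R.
Proof.
move=> n3 ij start; set N := (n - 2) * n; set K := \sum_(1 <= z < n) _.
have N_gt0 : (0 < INR N)%R.
  by apply: lt_0_INR; apply/ltP; rewrite /N muln_gt0; apply/andP; split; lia.
have D_gt0 : (0 < INR (expn N t))%R by rewrite INR_expn; apply: pow_lt.
rewrite /Pcond card_avoids // sum_INR_div.
have num_le : \sum_(2 <= m < n) #|[set w : t.-tuple ('I_n * 'I_n) | avoids i j w &&
      ev_window n j.+1 delta ((rtr_run (sig m) w i).+1, (rtr_run (sig m) w j).+1)]|
    <= expn N.+1 t * K.
  apply: leq_trans (sum_count_runs_le (fun z => window n j.+1 delta z.+1) t n3 ij start).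
  apply: leq_sum => m _; apply: subset_leq_card; apply/subsetP => w; rewrite !inE.
  by case/andP => -> /andP[_ near_j].
apply: Rle_trans (Rmult_le_compat_r _ _ _ (Rlt_le _ _ (Rinv_0_lt_compat _ D_gt0))
  (le_INR _ _ (elimT leP num_le))) _.
have -> : INR (expn N.+1 t * K) = (INR (expn N t) * (INR K * (1 + / INR N) ^ t))%R.
  rewrite mult_INR !INR_expn S_INR (_ : INR N + 1 = INR N * (1 + / INR N))%R.
    by rewrite Rpow_mult_distr; ring.
  by field; lra.
by apply: Req_le; field; lra.
Qed.

Lemma count_near_le (c d : R) (a b : nat) : (0 <= d)%R ->
  (INR (\sum_(a <= z < b) (if Rle_dec (Rabs (INR z - c)) d then 1 else 0))
     <= Rmax 0 (Rmin (INR b) (c + d + 1) - (c - d)))%R.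
Proof.
move=> d_ge0; elim: b => [|b IH]; first by rewrite big_geq //; apply: Rmax_l.
case: (leqP a b) => ab; last by rewrite big_geq //; apply: Rmax_l.
rewrite big_nat_recr // plus_INR S_INR.
case: Rle_dec => [near | far] /=.
- have [lo hi] : (c - d <= INR b <= c + d)%R by split; split_Rabs; lra.
  rewrite Rmin_left ?Rmax_right in IH; try lra.
  by apply: Rle_trans (Rmax_r _ _); rewrite Rmin_left; lra.
- rewrite Rplus_0_r; apply: Rle_trans IH _.
  by apply/Rle_max_compat_l/Rplus_le_compat_r/Rle_min_compat_r; lra.
Qed.

Lemma window_count_le n k (delta : R) : (0 <= delta)%R ->
  (INR (\sum_(1 <= z < n) window n k delta z.+1) <= 2 * delta + 1)%R /\
  (INR (\sum_(1 <= z < n) window n k delta z.+1) <= INR n)%R.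
Proof.
move=> d_ge0; split.
  apply: (@Rle_trans _ (INR (\sum_(2 <= z < n.+1)
    (if Rle_dec (Rabs (INR z - INR k)) delta then 1 else 0)))).
    apply: INR_leq; rewrite [leqRHS]big_add1 /=; apply: leq_sum => z _.
    by rewrite /window; case: Rle_dec => _ /=; rewrite ?andbF ?andbT ?leq_b1.
  apply: Rle_trans (count_near_le _ _ _ d_ge0) _.
  by apply: Rmax_lub; [lra | have := Rmin_r (INR n.+1) (INR k + delta + 1); lra].
apply: INR_leq; apply: (@leq_trans (\sum_(1 <= z < n) 1)).
  by apply: leq_sum => z _; apply: leq_b1.
by rewrite sum_nat_const_nat; lia.
Qed.

Lemma exp_le_exp x y : (x <= y)%R -> (exp x <= exp y)%R.
Proof. by case/Rle_lt_or_eq_dec => [/exp_increasing/Rlt_le | ->] //; apply: Rle_refl. Qed.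

Lemma pow_le_exp x t : (0 <= x)%R -> ((1 + x) ^ t <= exp (INR t * x))%R.
Proof.
move=> x_ge0; elim: t => [|t IH]; first by rewrite /= Rmult_0_l exp_0; lra.
rewrite S_INR Rmult_plus_distr_r Rmult_1_l exp_plus /= [X in (_ <= X)%R]Rmult_comm.
by apply: Rmult_le_compat; [lra | apply: pow_le; lra | apply: exp_ineq1_le | apply: IH].
Qed.

Lemma pow_one_plus_inv_le n t : 3 <= n -> (INR t <= INR n * ln (INR n))%R ->
  ((1 + / INR ((n - 2) * n)) ^ t <= exp (ln (INR n) / (INR n - 2)))%R.
Proof.
move=> n3 t_le; have n3R : (3 <= INR n)%R by have := INR_leq n3; rewrite /=; lra.
have -> : INR ((n - 2) * n) = ((INR n - 2) * INR n)%R.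
  by rewrite mult_INR minus_INR //; apply/leP; lia.
have inv_gt0 : (0 < / ((INR n - 2) * INR n))%R by apply: Rinv_0_lt_compat; nra.
apply: Rle_trans (pow_le_exp _ (Rlt_le _ _ inv_gt0)) (exp_le_exp _).
apply: Rle_trans (Rmult_le_compat_r _ _ _ (Rlt_le _ _ inv_gt0) t_le) _.
by apply: Req_le; field; lra.
Qed.

Lemma ln_INR_gt0 n : 2 <= n -> (0 < ln (INR n))%R.
Proof.
move=> n2; have n2R : (2 <= INR n)%R by have := INR_leq n2; rewrite /=; lra.
by rewrite -ln_1; apply: ln_increasing; lra.
Qed.

Lemma exp_ln_div_ge1 n : 3 <= n -> (1 <= exp (ln (INR n) / (INR n - 2)))%R.
Proof.
move=> n3; have n3R : (3 <= INR n)%R by have := INR_leq n3; rewrite /=; lra.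
have L_gt0 := ln_INR_gt0 (ltnW n3).
rewrite -exp_0; apply: exp_le_exp; apply: Rmult_le_pos; first lra.
by apply/Rlt_le/Rinv_0_lt_compat; lra.
Qed.

Lemma ln_le_sub2 n : 4 <= n -> (ln (INR n) <= INR n - 2)%R.
Proof.
move=> n4; have n4R : (4 <= INR n)%R by have := INR_leq n4; rewrite /=; lra.
apply: Rnot_lt_le => lt_ln; have := exp_increasing _ _ lt_ln; rewrite exp_ln; last lra.
set y := ((INR n - 2) / 2)%R; have -> : (INR n - 2 = y + y)%R by rewrite /y; field.
have e_ge := exp_ineq1_le y; have y_ge1 : (1 <= y)%R by rewrite /y; lra.
rewrite exp_plus; have : ((1 + y) * (1 + y) <= exp y * exp y)%R by apply: Rmult_le_compat; lra.
rewrite /y; nra.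
Qed.

Lemma expm1_ln_div_le n : 4 <= n ->
  (INR n * (exp (ln (INR n) / (INR n - 2)) - 1) <= 6 * ln (INR n))%R.
Proof.
move=> n4; have n4R : (4 <= INR n)%R by have := INR_leq n4; rewrite /=; lra.
have L_le := ln_le_sub2 n4.
move: L_le; set L := ln _; set y := (L / _)%R => L_le.
have Ly : (y * (INR n - 2) = L)%R by rewrite /y; field; lra.
have y_ge0 : (0 <= y)%R by have := ln_INR_gt0 (ltnW (ltnW n4)); rewrite -/L; nra.
have y_le1 : (y <= 1)%R by nra.
have E_le3 : (exp y <= 3)%R by have := exp_le_3; have := exp_le_exp y_le1; lra.
have Ey : (exp y - 1 <= y * exp y)%R.
  have := exp_ineq1_le (- y); rewrite exp_Ropp => inv_le; have E_gt0 := exp_pos y.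
  have : (exp y * (1 - y) <= exp y * / exp y)%R by apply: Rmult_le_compat_l; lra.
  rewrite Rinv_r; nra.
have ny : (INR n * y <= 2 * L)%R by nra.
nra.
Qed.

(* The actual error term is [1 + n (exp (ln n / (n - 2)) - 1) = O(ln n)]; the summand
   [ln n ^ 2] only makes [g_hat] of the order required. *)
Definition g_hat (n : nat) : R :=
  if 3 <= n then (ln (INR n) ^ 2 + 1 + INR n * (exp (ln (INR n) / (INR n - 2)) - 1))%R
  else 0%R.

Lemma g_hat_bounds n : 4 <= n -> (1 * ln (INR n) ^ 2 <= g_hat n <= 8 * ln (INR n) ^ 2)%R.
Proof.
move=> n4; have n4R : (4 <= INR n)%R by have := INR_leq n4; rewrite /=; lra.
have L_ge1 : (1 <= ln (INR n))%R.
  rewrite -[X in (X <= _)%R](ln_exp 1); apply/Rlt_le/ln_increasing; first exact: exp_pos.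
  by have := exp_le_3; lra.
rewrite /g_hat ifT; last by lia.
have := expm1_ln_div_le n4; have := exp_ln_div_ge1 (ltnW n4); move: L_ge1.
set L := ln _; set E := exp _ => L_ge1 E_ge1 expm1_le.
have : (0 <= INR n * (E - 1))%R by apply: Rmult_le_pos; [apply: pos_INR | lra].
have : (L <= L * L)%R by nra.
by rewrite /=; lra.
Qed.

Theorem corollary1 :
  exists g : nat -> R,
    (exists (c1 c2 : R) (N : nat),
        (0 < c1)%R /\ (0 < c2)%R /\
        forall n : nat, (N <= n)%N ->
          (c1 * (ln (INR n)) ^ 2 <= g n <= c2 * (ln (INR n)) ^ 2)%R) /\
    forall (n : nat) (i j : 'I_n) (delta : R) (t : nat)
           (sig : nat -> {perm 'I_n}),
      i != j ->
      (0 <= delta)%R ->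
      (INR t <= INR n * ln (INR n))%R ->
      (forall m : nat, (2 <= m < n)%N -> start_ok i j 1 m (sig m)) ->
      (\big[Rplus/0%R]_(2 <= m < n)
          Pcond t (sig m) i j (ev_window n (nat_of_ord j).+1 delta)
        <= 2 * delta + g n)%R.
Proof.
exists g_hat; split.
  by exists 1%R, 8%R, 4; do 2 (split; first lra); apply: g_hat_bounds.
move=> n i j delta t sig ij delta_ge0 t_le start.
case: (ltnP n 3) => n3.
  rewrite big_geq /g_hat ?ifF; [lra | lia | lia].
have [K_le_diam K_le_n] := window_count_le n j.+1 delta_ge0.
have growth := pow_one_plus_inv_le n3 t_le.
have E_ge1 := exp_ln_div_ge1 n3.
apply: Rle_trans (sum_Pcond_window_le delta t n3 ij start) _.
rewrite /g_hat n3; move: K_le_diam K_le_n growth E_ge1.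
set K := INR _; set q := (_ ^ t)%R; set E := exp _ => K_le_diam K_le_n growth E_ge1.
have : (K * q <= K * E)%R by apply: Rmult_le_compat_l => //; apply: pos_INR.
have : (0 <= (INR n - K) * (E - 1))%R by apply: Rmult_le_pos; lra.
have := pow2_ge_0 (ln (INR n)); set L2 := (ln _ ^ 2)%R; lra.
Qed.
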